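(* Let $X$ be a well-filtered space. The following conditions are equivalent: (1) $X$ is locally compact. (2) $\mathsf{K}(X)$ is a continuous semilattice, and the upper Vietoris topology and the Scott topology on $\mathsf{K}(X)$ coincide. (3) $\mathsf{K}(X)$ is a continuous semilattice, and the map $\xi_X^\sigma : X \to \Sigma\,\mathsf{K}(X)$, $x\mapsto \uparrow x$, is continuous. (4) $\mathsf{K}(X)$ is a continuous semilattice, and $X$ has property Q. (5) $X$ is core compact.
   Context: All spaces are $T_0$. The specialization order of a space $X$ is $x\le y$ iff $x\in\overline{\{y\}}$; $\uparrow x=\{y: x\le y\}$; a set is saturated iff it is an upper set in this order. $\mathsf{K}(X)$ denotes the set of all nonempty compact saturated subsets of $X$, ordered by reverse inclusion ($K_1\sqsubseteq K_2$ iff $K_2\subseteq K_1$); in this order, binary meets are unions, so $\mathsf{K}(X)$ is a semilattice, and a family $\{K_i\}$ has a supremum iff $\bigcap_i K_i\in\mathsf{K}(X)$, in which case the supremum is that intersection. For a poset $Q$, a subset $U$ is Scott open if it is an upper set and for every directed $D\subseteq Q$ whose supremum exists and lies in $U$, $D\cap U\neq\emptyset$; these sets form the Scott topology $\sigma(Q)$, and $\Sigma Q=(Q,\sigma(Q))$. In a poset, $a\ll b$ ($a$ way below $b$) means: for every directed $D$ whose supremum exists and $\bigvee D\ge b$, some $d\in D$ satisfies $d\ge a$. A poset is continuous if it is directed complete and for every $x$ the set $\{u: u\ll x\}$ is directed with supremum $x$; ''$\mathsf{K}(X)$ is a continuous semilattice'' means $\mathsf{K}(X)$ (with the order above) is continuous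 in this sense. For an open set $U$ of $X$, $\Box U=\{K\in\mathsf{K}(X): K\subseteq U\}$; the upper Vietoris topology on $\mathsf{K}(X)$ is the topology with base $\{\Box U: U \text{ open in } X\}$. A $T_0$ space $X$ is well-filtered if for every open $U$ and every family $\mathcal{K}\subseteq \mathsf{K}(X)$ directed with respect to $\sqsubseteq$ (i.e. filtered under inclusion), $\bigcap\mathcal K\subseteq U$ implies $K\subseteq U$ for some $K\in\mathcal K$. $X$ has property Q if for all $K_1,K_2\in\mathsf{K}(X)$: $K_1\ll K_2$ in $\mathsf{K}(X)$ iff $K_2\subseteq \operatorname{int}K_1$. $X$ is locally compact if every point has a neighborhood base consisting of compact sets; $X$ is core compact if its lattice of open sets $\mathcal O(X)$ is a continuous lattice. *)

From Stdlib Require Import List.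

Set Implicit Arguments.

Definition subset {A : Type} (S T : A -> Prop) : Prop := forall a, S a -> T a.

Section Order.
Variables (P : Type) (le : P -> P -> Prop).

Definition upper_bound (D : P -> Prop) (s : P) : Prop := forall d, D d -> le d s.
Definition is_sup (D : P -> Prop) (s : P) : Prop :=
  upper_bound D s /\ forall t, upper_bound D t -> le s t.
Definition directed (D : P -> Prop) : Prop :=
  (exists d, D d) /\
  forall a b, D a -> D b -> exists c, D c /\ le a c /\ le b c.
Definition upper_set (U : P -> Prop) : Prop := forall x y, U x -> le x y -> U y.
Definition scott_open (U : P -> Prop) : Prop :=
  upper_set U /\
  forall D s, directed D -> is_sup D s -> U s -> exists d, D d /\ U d.
Definition way_below (a b : P) : Prop :=
  forall D s, directed D -> is_sup D s -> le b s -> exists d, D d /\ le a d.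
Definition directed_complete : Prop :=
  forall D, directed D -> exists s, is_sup D s.
Definition continuous_poset : Prop :=
  directed_complete /\
  forall x, directed (fun u => way_below u x) /\ is_sup (fun u => way_below u x) x.
End Order.

Section Topology.
Variables (X : Type) (O : (X -> Prop) -> Prop).

Definition is_topology : Prop :=
  O (fun _ => True) /\
  (forall F : (X -> Prop) -> Prop, (forall U, F U -> O U) ->
     O (fun x => exists U, F U /\ U x)) /\
  (forall U V, O U -> O V -> O (fun x => U x /\ V x)).

Definition closed (C : X -> Prop) : Prop := O (fun x => ~ C x).
Definition closure (A : X -> Prop) (x : X) : Prop :=
  forall C, closed C -> subset A C -> C x.
Definition interior (A : X -> Prop) (x : X) : Prop :=
  exists U, O U /\ subset U A /\ U x.

Definition T0 : Prop :=
  forall x y, (forall U, O U -> (U x <-> U y)) -> x = y.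

Definition spec_le (x y : X) : Prop := closure (fun z => z = y) x.
Definition upset (x : X) : X -> Prop := fun y => spec_le x y.
Definition saturated (A : X -> Prop) : Prop := forall x y, A x -> spec_le x y -> A y.

Definition compact (K : X -> Prop) : Prop :=
  forall F : (X -> Prop) -> Prop,
    (forall U, F U -> O U) -> subset K (fun x => exists U, F U /\ U x) ->
    exists l : list (X -> Prop),
      (forall U, In U l -> F U) /\ subset K (fun x => exists U, In U l /\ U x).

Definition in_KX (K : X -> Prop) : Prop :=
  (exists x, K x) /\ compact K /\ saturated K.

Definition KX : Type := { K : X -> Prop | in_KX K }.
Definition Kset (K : KX) : X -> Prop := proj1_sig K.

Definition Kle (K1 K2 : KX) : Prop := subset (Kset K2) (Kset K1).

Definition Box (U : X -> Prop) : KX -> Prop := fun K => subset (Kset K) U.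
Definition upper_vietoris_open (V : KX -> Prop) : Prop :=
  exists F : (X -> Prop) -> Prop,
    (forall U, F U -> O U) /\
    forall K, V K <-> exists U, F U /\ Box U K.

Definition well_filtered : Prop :=
  forall (U : X -> Prop) (Kf : KX -> Prop),
    O U -> directed Kle Kf ->
    subset (fun x => forall K, Kf K -> Kset K x) U ->
    exists K, Kf K /\ subset (Kset K) U.

Definition property_Q : Prop :=
  forall K1 K2 : KX, way_below Kle K1 K2 <-> subset (Kset K2) (interior (Kset K1)).

Definition locally_compact : Prop :=
  forall x U, O U -> U x ->
    exists N, compact N /\ interior N x /\ subset N U.

Definition OX : Type := { U : X -> Prop | O U }.
Definition OXle (U V : OX) : Prop := subset (proj1_sig U) (proj1_sig V).
Definition core_compact : Prop := continuous_poset OXle.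

(* the map xi : X -> Sigma K(X), x |-> upset x, is continuous:
   preimages of Scott open sets are open *)
Definition xi_continuous : Prop :=
  forall V : KX -> Prop, scott_open Kle V ->
    O (fun x => exists K : KX, (forall y, Kset K y <-> upset x y) /\ V K).

End Topology.

From Stdlib Require Import List Classical ClassicalEpsilon.
From Stdlib Require Import FunctionalExtensionality PropExtensionality Lia Arith.
From mathcomp Require classical_sets.

(* In a well-filtered space directed suprema in K(X) are intersections, and an open set contains
   such an intersection only if it contains one of its members. Under local compactness this makes
   [K1 << K2] equivalent to [K2] lying in the interior of [K1], so K(X) is continuous, has property
   Q, and the boxes of interiors of members of a Scott open set cover it. Conversely, if K(X) is
   continuous, every open neighbourhood of [x] contains some [K << upset x]; property Q, or the
   continuity of [x |-> upset x] at the Scott open set of all [K' >> K], puts [x] in the interior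
   of [K].

   Local compactness gives core compactness directly. Conversely, interpolation in O(X) yields
   opens [U = U_0 >> U_1 >> ...] way above a neighbourhood [V] of [x], and their intersection is
   compact. Otherwise some open [W] contains the intersection but no [U_n]; a Zorn-minimal closed
   set [A] outside [W] meeting every [U_n] has [A /\ U_m] inside any open set meeting [A], for
   large [m]; so points [d_n] of [A] in [U_n] have compact tail upsets. These form a filtered family whose
   intersection lies in [W] while no member does, contradicting well-filteredness. *)

Lemma set_ext {T : Type} (A B : T -> Prop) : subset A B -> subset B A -> A = B.
Proof. intros HAB HBA. extensionality x. apply propositional_extensionality. split; auto. Qed.

(* Zorn's lemma applied to the complements [A0 \ U]: a maximal complement is a minimal member. *)
Lemma chain_closed_family_minimal {T : Type} (C : (T -> Prop) -> Prop) (A0 : T -> Prop) :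
  (forall ch : (T -> Prop) -> Prop, (forall A, ch A -> C A) ->
     (forall A B, ch A -> ch B -> subset A B \/ subset B A) -> (exists A, ch A) ->
     C (fun x => forall A, ch A -> A x)) ->
  C A0 -> exists M, C M /\ forall B, C B -> subset B M -> subset M B.
Proof.
  intros Hchain HA0.
  pose (diff := fun (U : T -> Prop) x => A0 x /\ ~ U x).
  destruct (@classical_sets.Zorn_bigcup T (fun U => C (diff U))) as [U [HU Hmax]].
  - intros F HF Htot.
    pose (ch := fun B => B = A0 \/ exists2 V, F V & B = diff V).
    replace (diff _) with (fun x => forall B, ch B -> B x).
    + apply Hchain.
      * intros B [-> | [V HV ->]]; [exact HA0 | exact (HF V HV)].
      * intros B1 B2 HB1 HB2.
        assert (Hsub : forall V, subset (diff V) A0) by (intros V x [Hx _]; exact Hx).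
        destruct HB1 as [-> | [V1 HV1 ->]], HB2 as [-> | [V2 HV2 ->]].
        -- left; intros x Hx; exact Hx.
        -- right; apply Hsub.
        -- left; apply Hsub.
        -- destruct (Htot V1 V2 HV1 HV2) as [H12 | H21].
           ++ right. intros x [Hx HV2x]. split; auto.
           ++ left. intros x [Hx HV1x]. split; auto.
      * exists A0; left; reflexivity.
    + apply set_ext.
      * intros x Hx. split; [apply Hx; left; reflexivity |].
        intros [V HV HVx]. apply (Hx (diff V)); auto. right; exists V; auto.
      * intros x [Hx Hnx] B [-> | [V HV ->]]; auto.
        split; auto. intros HVx. apply Hnx. exists V; auto.
  - exists (diff U). split; auto. intros B HB HBU.
    pose (U' := fun x => ~ B x).
    assert (HBdiff : diff U' = B).
    { apply set_ext; intros x Hx.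
      - apply NNPP, Hx.
      - split; [apply (HBU x Hx) | auto]. }
    assert (HUU' : subset U U') by (intros x HUx HBx; apply (HBU x HBx), HUx).
    assert (HU'U : subset U' U).
    { apply NNPP; intros Hn. apply (Hmax U'); [split; auto | rewrite HBdiff; auto]. }
    intros x [HA0x HnUx]. apply NNPP; intros HnBx. apply HnUx, HU'U, HnBx.
Qed.

(** * The way-below relation *)

Section WayBelow.
Context {P : Type} {le : P -> P -> Prop}.
Context (le_refl : forall a, le a a) (le_trans : forall a b c, le a b -> le b c -> le a c).

Lemma way_below_le {a b} : way_below le a b -> le a b.
Proof.
  intros Hab. destruct (Hab (fun d => d = b) b) as [d [-> Had]]; auto.
  - split; [exists b; reflexivity |]. intros x y -> ->. exists b; auto.
  - split; [intros d -> | intros t Ht; apply Ht]; auto.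
Qed.

Lemma way_below_monotone a a' b b' :
  le a a' -> way_below le a' b -> le b b' -> way_below le a b'.
Proof.
  intros Haa' Ha'b Hbb' D s HD Hs Hb's.
  destruct (Ha'b D s HD Hs) as [d [Hd Ha'd]]; eauto.
Qed.

Lemma directed_list_upper_bound (D : P -> Prop) (l : list P) :
  directed le D -> (forall a, In a l -> D a) -> exists c, D c /\ forall a, In a l -> le a c.
Proof.
  intros [[d0 Hd0] Hdir]. induction l as [|a l IH]; intros Hl.
  - exists d0. split; [exact Hd0 | intros a []].
  - destruct IH as [c [Hc Hlc]]; [intros b Hb; apply Hl; right; exact Hb |].
    destruct (Hdir a c) as [e [He [Hae Hce]]]; [apply Hl; left; reflexivity | exact Hc |].
    exists e. split; [exact He |]. intros b [<- | Hb]; eauto.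
Qed.

Section Continuous.
Context (Hcont : continuous_poset le).

Lemma way_below_interpolate {a b} :
  way_below le a b -> exists m, way_below le a m /\ way_below le m b.
Proof.
  intros Hab. destruct Hcont as [_ Happrox].
  pose (D := fun u => exists v, way_below le u v /\ way_below le v b).
  assert (HD : directed le D).
  { split.
    - destruct (Happrox b) as [[[v Hv] _] _]. destruct (Happrox v) as [[[u Hu] _] _].
      exists u, v; auto.
    - intros u1 u2 [v1 [Hu1 Hv1]] [v2 [Hu2 Hv2]].
      destruct (proj2 (proj1 (Happrox b)) v1 v2 Hv1 Hv2) as [v [Hv [Hv1v Hv2v]]].
      destruct (proj2 (proj1 (Happrox v)) u1 u2) as [u [Hu [Hu1u Hu2u]]];
        [eapply way_below_monotone; eauto .. |].
      exists u. split; [exists v |]; auto. }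
  assert (Hsup : is_sup le D b).
  { split.
    - intros u [v [Huv Hvb]]. eapply le_trans; apply way_below_le; eauto.
    - intros t Ht. apply (proj2 (proj2 (Happrox b))). intros v Hv.
      apply (proj2 (proj2 (Happrox v))). intros u Hu. apply Ht. exists v; auto. }
  destruct (Hab D b HD Hsup (le_refl b)) as [d [[v [Hdv Hvb]] Had]].
  exists v. split; [eapply way_below_monotone; eauto | exact Hvb].
Qed.

Lemma way_below_scott_open a : scott_open le (way_below le a).
Proof.
  split.
  - intros x y Hx Hxy. eapply way_below_monotone; eauto.
  - intros D s HD Hs Has. destruct (way_below_interpolate Has) as [m [Ham Hms]].
    destruct (Hms D s HD Hs (le_refl s)) as [d [Hd Hmd]].
    exists d. split; [exact Hd | eapply way_below_monotone; eauto].
Qed.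

Lemma way_below_chain {a b} : way_below le a b ->
  exists c : nat -> P, c 0 = b /\ (forall n, way_below le (c (S n)) (c n)) /\
                       (forall n, way_below le a (c n)).
Proof.
  intros Hab.
  destruct (choice (fun m m' => way_below le a m -> way_below le a m' /\ way_below le m' m))
    as [step Hstep].
  { intros m. destruct (classic (way_below le a m)) as [Ham | Hnam].
    - destruct (way_below_interpolate Ham) as [m' Hm']. exists m'; auto.
    - exists m. intros Ham; contradiction. }
  pose (c := fun n => Nat.iter n step b).
  assert (Hac : forall n, way_below le a (c n)).
  { induction n as [|n IH]; [exact Hab | apply (Hstep _ IH)]. }
  exists c. split; [reflexivity | split; [intros n; apply (Hstep _ (Hac n)) | exact Hac]].
Qed.
End Continuous.
End WayBelow.

(** * Compact and saturated sets *)

Lemma list_choice {A B : Type} (R : A -> B -> Prop) (l : list A) :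
  (forall a, In a l -> exists b, R a b) ->
  exists lb : list B, (forall b, In b lb -> exists a, In a l /\ R a b) /\
                      (forall a, In a l -> exists b, In b lb /\ R a b).
Proof.
  induction l as [|a l IH]; intros Hl.
  - exists nil. split; intros ? [].
  - destruct (Hl a (or_introl eq_refl)) as [b Hab].
    destruct IH as [lb [Hlb1 Hlb2]]; [intros a' Ha'; apply Hl; right; exact Ha' |].
    exists (b :: lb). split.
    + intros b' [<- | Hb']; [exists a; split; [left |]; auto |].
      destruct (Hlb1 b' Hb') as [a' [? ?]]. exists a'. split; [right |]; auto.
    + intros a' [<- | Ha']; [exists b; split; [left |]; auto |].
      destruct (Hlb2 a' Ha') as [b' [? ?]]. exists b'. split; [right |]; auto.
Qed.

Section Topology.
Context {X : Type} {O : (X -> Prop) -> Prop} (HO : is_topology O).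

Definition list_union (l : list (X -> Prop)) : X -> Prop := fun x => exists U, In U l /\ U x.

Lemma open_ext U V : O U -> (forall x, U x <-> V x) -> O V.
Proof. intros HU HUV. replace V with U; [exact HU |]. apply set_ext; intros x; apply HUV. Qed.

Lemma open_full : O (fun _ => True).
Proof. apply HO. Qed.

Lemma open_union (F : (X -> Prop) -> Prop) :
  (forall U, F U -> O U) -> O (fun x => exists U, F U /\ U x).
Proof. apply HO. Qed.

Lemma open_inter U V : O U -> O V -> O (fun x => U x /\ V x).
Proof. apply HO. Qed.

Lemma open_empty : O (fun _ => False).
Proof.
  apply open_ext with (fun x => exists U, (fun _ : X -> Prop => False) U /\ U x).
  - apply open_union. intros U [].
  - intros x. split; [intros [U [[] _]] | intros []].
Qed.

Lemma open_list_union l : (forall U, In U l -> O U) -> O (list_union l).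
Proof. apply open_union. Qed.

Lemma closed_inter (F : (X -> Prop) -> Prop) :
  (forall B, F B -> closed O B) -> closed O (fun x => forall B, F B -> B x).
Proof.
  intros HF. unfold closed.
  apply open_ext with (fun x => exists U, (fun U => exists B, F B /\ U = fun y => ~ B y) U /\ U x).
  - apply open_union. intros U [B [HB ->]]. exact (HF B HB).
  - intros x. split.
    + intros [U [[B [HB ->]] HBx]] Hx. exact (HBx (Hx B HB)).
    + intros Hx. apply not_all_ex_not in Hx as [B HB].
      apply imply_to_and in HB as [HB HBx]. exists (fun y => ~ B y). split; eauto.
Qed.

Lemma closed_diff A U : closed O A -> O U -> closed O (fun x => A x /\ ~ U x).
Proof.
  intros HA HU. unfold closed.
  apply open_ext with (fun x => exists V, (fun V => V = (fun y => ~ A y) \/ V = U) V /\ V x).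
  - apply open_union. intros V [-> | ->]; assumption.
  - intros x. split.
    + intros [V [[-> | ->] HVx]] [HAx HUx]; auto.
    + intros Hx. destruct (classic (U x)) as [HUx | HUx].
      * exists U; auto.
      * exists (fun y => ~ A y). split; [left; reflexivity |]. intros HAx; auto.
Qed.

Lemma spec_refl x : spec_le O x x.
Proof. intros C _ HC. apply HC; reflexivity. Qed.

Lemma spec_trans x y z : spec_le O x y -> spec_le O y z -> spec_le O x z.
Proof. intros Hxy Hyz C HC Hz. apply Hxy; [exact HC |]. intros a ->. apply Hyz; auto. Qed.

Lemma closed_downset y : closed O (fun z => spec_le O z y).
Proof.
  pose (F := fun B => closed O B /\ subset (fun w => w = y) B).
  apply open_ext with (fun x => ~ forall B, F B -> B x).
  - exact (closed_inter F (fun B HB => proj1 HB)).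
  - intros x. split; intros Hx Hxy; apply Hx.
    + intros B [HB HyB]. exact (Hxy B HB HyB).
    + intros C HC HyC. exact (Hxy C (conj HC HyC)).
Qed.

Lemma open_saturated {U x y} : O U -> U x -> spec_le O x y -> U y.
Proof.
  intros HU HUx Hxy. apply NNPP; intros HUy.
  apply (Hxy (fun z => ~ U z)); [| intros a ->; exact HUy | exact HUx].
  unfold closed. apply open_ext with U; [exact HU |]. intros z; split; [auto | apply NNPP].
Qed.

Lemma interior_open A : O (interior O A).
Proof.
  apply open_ext with (fun x => exists U, (fun U => O U /\ subset U A) U /\ U x).
  - apply open_union. intros U [HU _]; exact HU.
  - intros x. split; [intros [U [[HU HUA] HUx]] | intros [U [HU [HUA HUx]]]]; exists U; auto.
Qed.

Lemma interior_subset {A x} : interior O A x -> A x.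
Proof. intros [U [_ [HUA HUx]]]. exact (HUA x HUx). Qed.

Lemma interior_mono {A B} : subset A B -> subset (interior O A) (interior O B).
Proof.
  intros HAB x [U [HU [HUA HUx]]]. exists U.
  split; [exact HU | split; [intros z Hz; auto | exact HUx]].
Qed.

Definition sat (S : X -> Prop) : X -> Prop := fun y => exists x, S x /\ spec_le O x y.

Lemma sat_saturated S : saturated O (sat S).
Proof. intros x y [z [Hz Hzx]] Hxy. exists z. split; [exact Hz | eapply spec_trans; eauto]. Qed.

Lemma subset_sat S : subset S (sat S).
Proof. intros x Hx. exists x. split; [exact Hx | apply spec_refl]. Qed.

Lemma compact_sat S : compact O S -> compact O (sat S).
Proof.
  intros HS F HF Hcov. destruct (HS F HF) as [l [HlF Hl]].
  - intros x Hx. apply Hcov, subset_sat, Hx.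
  - exists l. split; [exact HlF |]. intros y [x [Hx Hxy]].
    destruct (Hl x Hx) as [U [HU HUx]]. exists U. split; [exact HU |].
    apply (open_saturated (HF U (HlF U HU)) HUx Hxy).
Qed.

Lemma compact_list_union (Ns : list (X -> Prop)) :
  (forall N, In N Ns -> compact O N) -> compact O (list_union Ns).
Proof.
  induction Ns as [|N Ns IH]; intros HNs F HF Hcov.
  - exists nil. split; [intros U [] | intros x [N [[] _]]].
  - destruct (HNs N (or_introl eq_refl) F HF) as [l1 [Hl1F Hl1]].
    { intros x Hx. apply Hcov. exists N. split; [left |]; auto. }
    destruct (IH (fun N' HN' => HNs N' (or_intror HN')) F HF) as [l2 [Hl2F Hl2]].
    { intros x [N' [HN' Hx]]. apply Hcov. exists N'. split; [right |]; auto. }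
    exists (l1 ++ l2). split.
    + intros U HU. apply in_app_or in HU as [HU | HU]; auto.
    + intros x [N' [[<- | HN'] Hx]].
      * destruct (Hl1 x Hx) as [U [HU HUx]]. exists U. split; [apply in_or_app |]; auto.
      * destruct (Hl2 x) as [U [HU HUx]]; [exists N'; auto |].
        exists U. split; [apply in_or_app |]; auto.
Qed.

Lemma compact_indexed_cover {I : Type} (D : I -> Prop) (f : I -> X -> Prop) (N : X -> Prop) :
  compact O N -> (forall i, D i -> O (f i)) -> subset N (fun x => exists i, D i /\ f i x) ->
  exists li : list I, (forall i, In i li -> D i) /\ subset N (fun x => exists i, In i li /\ f i x).
Proof.
  intros HN Hf Hcov.
  destruct (HN (fun U => exists i, D i /\ U = f i)) as [l [HlF Hl]].
  - intros U [i [Hi ->]]. exact (Hf i Hi).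
  - intros x Hx. destruct (Hcov x Hx) as [i [Hi Hix]]. exists (f i). split; eauto.
  - destruct (list_choice (fun U i => D i /\ U = f i) l HlF) as [li [Hli1 Hli2]].
    exists li. split.
    + intros i Hi. destruct (Hli1 i Hi) as [U [_ [HDi _]]]. exact HDi.
    + intros x Hx. destruct (Hl x Hx) as [U [HU HUx]].
      destruct (Hli2 U HU) as [i [Hi [_ ->]]]. exists i; auto.
Qed.

Lemma compact_directed_cover {I : Type} (D : I -> Prop) (f : I -> X -> Prop) (N : X -> Prop) :
  compact O N -> (forall i, D i -> O (f i)) -> directed (fun i j => subset (f i) (f j)) D ->
  subset N (fun x => exists i, D i /\ f i x) -> exists i, D i /\ subset N (f i).
Proof.
  intros HN Hf HD Hcov. destruct (compact_indexed_cover D f N HN Hf Hcov) as [li [HliD Hli]].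
  destruct (directed_list_upper_bound (fun i x Hx => Hx)
              (fun i j k Hij Hjk x Hx => Hjk x (Hij x Hx)) D li HD HliD)
    as [j [Hj Hlij]].
  exists j. split; [exact Hj |]. intros x Hx. destruct (Hli x Hx) as [i [Hi Hix]].
  exact (Hlij i Hi x Hix).
Qed.

Lemma upset_in_KX x : in_KX O (upset O x).
Proof.
  split; [exists x; apply spec_refl | split].
  - intros F HF Hcov. destruct (Hcov x (spec_refl x)) as [U [HU HUx]].
    exists (U :: nil). split; [intros V [<- | []]; exact HU |].
    intros y Hxy. exists U. split; [left; reflexivity |].
    exact (open_saturated (HF U HU) HUx Hxy).
  - intros y z Hxy Hyz. eapply spec_trans; eauto.
Qed.

Definition Kup (x : X) : KX O := exist _ (upset O x) (upset_in_KX x).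

Lemma Kle_refl (K : KX O) : Kle K K.
Proof. intros x Hx; exact Hx. Qed.

Lemma Kle_trans (K1 K2 K3 : KX O) : Kle K1 K2 -> Kle K2 K3 -> Kle K1 K3.
Proof. intros H12 H23 x Hx. exact (H12 x (H23 x Hx)). Qed.

Definition tail_upset (d : nat -> X) (j : nat) : X -> Prop :=
  fun z => exists k, j <= k /\ spec_le O (d k) z.

Section TailUpset.
Context (d : nat -> X).
Context (d_eventually : forall U i, O U -> U (d i) -> exists m, forall k, m <= k -> U (d k)).

(* Some covering set contains all [d k] with [k >= m]; the upsets of the finitely many remaining
   terms are covered separately. *)
Lemma tail_upset_compact j : compact O (tail_upset d j).
Proof.
  intros F HF Hcov.
  destruct (Hcov (d j)) as [U1 [HU1 HU1d]]; [exists j; split; [constructor | apply spec_refl] |].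
  destruct (d_eventually U1 j (HF U1 HU1) HU1d) as [m Hm].
  pose (head := map (fun k => upset O (d k)) (seq j (m - j))).
  assert (Hhead : compact O (list_union head)).
  { apply compact_list_union. intros N HN.
    apply in_map_iff in HN as [k [<- _]]. apply upset_in_KX. }
  destruct (Hhead F HF) as [l [HlF Hl]].
  - intros z [N [HN Hz]]. apply in_map_iff in HN as [k [<- Hk]]. apply in_seq in Hk.
    apply Hcov. exists k. split; [lia | exact Hz].
  - exists (U1 :: l). split; [intros U [<- | HU]; auto |].
    intros z [k [Hjk Hkz]]. destruct (le_lt_dec m k) as [Hmk | Hkm].
    + exists U1. split; [left; reflexivity |].
      exact (open_saturated (HF U1 HU1) (Hm k Hmk) Hkz).
    + destruct (Hl z) as [U [HU HUz]].
      * exists (upset O (d k)). split; [| exact Hkz].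
        apply in_map_iff. exists k. split; [reflexivity | apply in_seq; lia].
      * exists U. split; [right |]; auto.
Qed.

Lemma tail_upset_in_KX j : in_KX O (tail_upset d j).
Proof.
  split; [exists (d j), j; split; [constructor | apply spec_refl] | split].
  - apply tail_upset_compact.
  - intros y z [k [Hjk Hky]] Hyz. exists k. split; [exact Hjk | eapply spec_trans; eauto].
Qed.
End TailUpset.

Lemma locally_compact_nbhd {K U} : locally_compact O -> compact O K -> O U -> subset K U ->
  exists Q, compact O Q /\ saturated O Q /\ subset K (interior O Q) /\ subset Q U.
Proof.
  intros Hlc HK HU HKU.
  destruct (compact_indexed_cover (fun N => compact O N /\ subset N U) (interior O) K HK
              (fun N _ => interior_open N)) as [Ns [HNs HKNs]].
  { intros x Hx. destruct (Hlc x U HU (HKU x Hx)) as [N [HN [HNx HNU]]]. exists N; auto. }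
  exists (sat (list_union Ns)). split; [| split; [| split]].
  - apply compact_sat, compact_list_union. intros N HN. apply HNs, HN.
  - apply sat_saturated.
  - intros x Hx. destruct (HKNs x Hx) as [N [HN HNx]].
    apply (interior_mono (B := sat (list_union Ns))) in HNx; [exact HNx |].
    intros y Hy. apply subset_sat. exists N; auto.
  - intros y [x [[N [HN Hx]] Hxy]]. apply (open_saturated HU (proj2 (HNs N HN) x Hx) Hxy).
Qed.
End Topology.

(** * The semilattice K(X) of a well-filtered space *)

Section WellFilteredK.
Context {X : Type} {O : (X -> Prop) -> Prop} (HO : is_topology O) (Hwf : well_filtered O).
Local Notation KL := (@Kle X O).

Definition Kinter (D : KX O -> Prop) : X -> Prop := fun x => forall K, D K -> Kset K x.

Lemma Kinter_in_KX {D} : directed KL D -> in_KX O (Kinter D).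
Proof.
  intros HD. split; [| split].
  - apply NNPP; intros Hempty.
    destruct (Hwf (fun _ => False) D (open_empty HO) HD) as [K [_ HK]].
    + intros x Hx. apply Hempty. exists x; exact Hx.
    + destruct (proj2_sig K) as [[x Hx] _]. exact (HK x Hx).
  - intros F HF Hcov.
    destruct (Hwf _ D (open_union HO F HF) HD Hcov) as [K [HDK HK]].
    destruct (proj1 (proj2 (proj2_sig K)) F HF HK) as [l [HlF Hl]].
    exists l. split; [exact HlF |]. intros x Hx. exact (Hl x (Hx K HDK)).
  - intros x y Hx Hxy K HDK. exact (proj2 (proj2 (proj2_sig K)) x y (Hx K HDK) Hxy).
Qed.

Lemma Kinter_is_sup {D} (HD : directed KL D) : is_sup KL D (exist _ (Kinter D) (Kinter_in_KX HD)).
Proof.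
  split.
  - intros K HDK x Hx. exact (Hx K HDK).
  - intros K HK x Hx K' HDK'. exact (HK K' HDK' x Hx).
Qed.

Lemma K_directed_complete : directed_complete KL.
Proof. intros D HD. eexists. apply (Kinter_is_sup HD). Qed.

Lemma Kinter_subset_sup {D s} : directed KL D -> is_sup KL D s -> subset (Kinter D) (Kset s).
Proof. intros HD [_ Hs]. exact (Hs _ (proj1 (Kinter_is_sup HD))). Qed.

Lemma well_filtered_sup {D s U} : directed KL D -> is_sup KL D s -> O U -> subset (Kset s) U ->
  exists K, D K /\ subset (Kset K) U.
Proof.
  intros HD Hs HU HsU. apply Hwf; [exact HU | exact HD |].
  intros x Hx. exact (HsU x (Kinter_subset_sup HD Hs x Hx)).
Qed.

Definition int_below (K1 K2 : KX O) : Prop := subset (Kset K2) (interior O (Kset K1)).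

Lemma int_below_way_below K1 K2 : int_below K1 K2 -> way_below KL K1 K2.
Proof.
  intros H12 D s HD Hs H2s.
  destruct (well_filtered_sup HD Hs (interior_open HO (Kset K1))) as [K [HDK HK]].
  - intros x Hx. exact (H12 x (H2s x Hx)).
  - exists K. split; [exact HDK |]. intros x Hx. exact (interior_subset (HK x Hx)).
Qed.

Section LocallyCompact.
Context (Hlc : locally_compact O).

Lemma int_below_exists K2 {U} : O U -> subset (Kset K2) U ->
  exists K, int_below K K2 /\ subset (Kset K) U.
Proof.
  intros HU H2U.
  destruct (locally_compact_nbhd HO Hlc (proj1 (proj2 (proj2_sig K2))) HU H2U)
    as [Q [HQc [HQs [H2Q HQU]]]].
  assert (HQ : in_KX O Q).
  { split; [| split; [exact HQc | exact HQs]].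
    destruct (proj2_sig K2) as [[x Hx] _]. exists x. exact (interior_subset (H2Q x Hx)). }
  exists (exist _ Q HQ). split; [exact H2Q | exact HQU].
Qed.

Lemma int_below_directed K2 : directed KL (fun K => int_below K K2).
Proof.
  split.
  - destruct (int_below_exists K2 (open_full HO) (fun _ _ => I)) as [K [HK _]].
    exists K; exact HK.
  - intros K K' HK HK'.
    pose proof (open_inter HO _ _ (interior_open HO (Kset K)) (interior_open HO (Kset K'))) as HU.
    destruct (int_below_exists K2 HU (fun x Hx => conj (HK x Hx) (HK' x Hx))) as [K'' [HK'' HK''U]].
    exists K''. split; [exact HK'' | split];
      intros x Hx; apply (interior_subset (O := O)), HK''U, Hx.
Qed.

Lemma int_below_sup K2 : is_sup KL (fun K => int_below K K2) K2.
Proof.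
  split.
  - intros K HK x Hx. exact (interior_subset (HK x Hx)).
  - intros t Ht y Hty. apply NNPP; intros H2y.
    assert (H2U : subset (Kset K2) (fun x => ~ spec_le O x y)).
    { intros x Hx Hxy. exact (H2y (proj2 (proj2 (proj2_sig K2)) x y Hx Hxy)). }
    destruct (int_below_exists K2 (closed_downset HO y) H2U) as [K [HK HKU]].
    exact (HKU y (Ht K HK y Hty) (spec_refl y)).
Qed.

Lemma way_below_int_below K1 K2 : way_below KL K1 K2 -> int_below K1 K2.
Proof.
  intros H12.
  destruct (H12 _ K2 (int_below_directed K2) (int_below_sup K2) (fun x Hx => Hx)) as [K [HK HK1]].
  intros x Hx. exact (interior_mono HK1 x (HK x Hx)).
Qed.

Lemma lc_property_Q : property_Q O.
Proof. intros K1 K2. split; [apply way_below_int_below | apply int_below_way_below]. Qed.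

Lemma lc_K_continuous : continuous_poset KL.
Proof.
  split; [exact K_directed_complete |]. intros K2.
  replace (fun K => way_below KL K K2) with (fun K => int_below K K2).
  - split; [apply int_below_directed | apply int_below_sup].
  - extensionality K. apply propositional_extensionality. apply iff_sym, lc_property_Q.
Qed.
End LocallyCompact.
End WellFilteredK.

Section KTopologies.
Context {X : Type} {O : (X -> Prop) -> Prop} (HO : is_topology O) (Hwf : well_filtered O).
Local Notation KL := (@Kle X O).

Lemma upper_vietoris_scott_open V : upper_vietoris_open V -> scott_open KL V.
Proof.
  intros [F [HF HV]]. split.
  - intros K K' HK HKK'. apply HV in HK as [U [HU HKU]]. apply HV.
    exists U. split; [exact HU | intros x Hx; exact (HKU x (HKK' x Hx))].
  - intros D s HD Hs HVs. apply HV in HVs as [U [HU HsU]].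
    destruct (well_filtered_sup HO Hwf HD Hs (HF U HU) HsU) as [K [HDK HKU]].
    exists K. split; [exact HDK |]. apply HV. exists U; auto.
Qed.

(* [V] is the union of the boxes [Box (interior K)] over its members [K]. *)
Lemma scott_upper_vietoris_open V : continuous_poset KL -> property_Q O ->
  scott_open KL V -> upper_vietoris_open V.
Proof.
  intros [_ Happrox] HQ [HVup HVscott].
  exists (fun U => exists K, V K /\ U = interior O (Kset K)). split.
  - intros U [K [_ ->]]. apply interior_open, HO.
  - intros K. split.
    + intros HVK. destruct (Happrox K) as [HD Hsup].
      destruct (HVscott _ K HD Hsup HVK) as [K' [HK'K HVK']].
      exists (interior O (Kset K')). split; [exists K'; auto | apply HQ, HK'K].
    + intros [U [[K' [HVK' ->]] HKU]]. apply (HVup K' K HVK').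
      intros x Hx. exact (interior_subset (HKU x Hx)).
Qed.

Lemma xi_continuous_of_upper_vietoris :
  (forall V, upper_vietoris_open V <-> scott_open KL V) -> xi_continuous O.
Proof.
  intros Heq V HV. apply Heq in HV as [F [HF HV]].
  apply open_ext with (fun x => exists U, F U /\ U x); [apply open_union, HF; exact HO |].
  intros x. split.
  - intros [U [HU HUx]]. exists (Kup x). split; [intros y; reflexivity |].
    apply HV. exists U. split; [exact HU |]. intros y Hxy. exact (open_saturated (HF U HU) HUx Hxy).
  - intros [K [HKx HVK]]. apply HV in HVK as [U [HU HKU]].
    exists U. split; [exact HU |]. apply HKU, HKx, spec_refl.
Qed.

Lemma way_below_upset_in_open {U x} : continuous_poset KL -> O U -> U x ->
  exists K, way_below KL K (Kup x) /\ subset (Kset K) U.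
Proof.
  intros [_ Happrox] HU HUx. destruct (Happrox (Kup x)) as [HD Hsup].
  apply (well_filtered_sup HO Hwf HD Hsup HU). intros y Hxy. exact (open_saturated HU HUx Hxy).
Qed.

Lemma lc_of_property_Q : continuous_poset KL -> property_Q O -> locally_compact O.
Proof.
  intros Hcont HQ x U HU HUx.
  destruct (way_below_upset_in_open Hcont HU HUx) as [K [HKx HKU]].
  exists (Kset K). split; [exact (proj1 (proj2 (proj2_sig K))) |]. split; [| exact HKU].
  apply HQ in HKx. apply HKx, spec_refl.
Qed.

Lemma lc_of_xi_continuous : continuous_poset KL -> xi_continuous O -> locally_compact O.
Proof.
  intros Hcont Hxi x U HU HUx.
  destruct (way_below_upset_in_open Hcont HU HUx) as [K [HKx HKU]].
  exists (Kset K). split; [exact (proj1 (proj2 (proj2_sig K))) |]. split; [| exact HKU].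
  eexists. split; [apply (Hxi _ (way_below_scott_open Kle_refl Kle_trans Hcont K)) |].
  split.
  - intros y [K' [HK'y HKK']]. apply (way_below_le Kle_refl) in HKK'.
    apply HKK', HK'y, spec_refl.
  - exists (Kup x). split; [intros y; reflexivity | exact HKx].
Qed.
End KTopologies.

(** * Core compactness *)

Section OpenLattice.
Context {X : Type} {O : (X -> Prop) -> Prop} (HO : is_topology O).
Local Notation OL := (@OXle X O).

Lemma OXle_refl (U : OX O) : OL U U.
Proof. intros x Hx; exact Hx. Qed.

Lemma OXle_trans (U V W : OX O) : OL U V -> OL V W -> OL U W.
Proof. intros HUV HVW x Hx. exact (HVW x (HUV x Hx)). Qed.

Definition OX_union (D : OX O -> Prop) : X -> Prop := fun x => exists Z, D Z /\ proj1_sig Z x.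

Lemma OX_union_open D : O (OX_union D).
Proof.
  apply open_ext with (fun x => exists U, (fun U => exists Z, D Z /\ U = proj1_sig Z) U /\ U x).
  - apply (open_union HO). intros U [Z [_ ->]]. exact (proj2_sig Z).
  - intros x. split.
    + intros [U [[Z [HZ ->]] HZx]]. exists Z; auto.
    + intros [Z [HZ HZx]]. exists (proj1_sig Z); eauto.
Qed.

Lemma OX_union_is_sup D : is_sup OL D (exist _ (OX_union D) (OX_union_open D)).
Proof.
  split.
  - intros Z HZ x Hx. exists Z; auto.
  - intros U HU x [Z [HZ HZx]]. exact (HU Z HZ x HZx).
Qed.

Lemma OX_sup_subset_union {D s} : is_sup OL D s -> subset (proj1_sig s) (OX_union D).
Proof. intros [_ Hs]. exact (Hs _ (proj1 (OX_union_is_sup D))). Qed.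

Lemma OX_way_below_cover {U V} D : way_below OL U V -> directed OL D ->
  subset (proj1_sig V) (OX_union D) -> exists Z, D Z /\ OL U Z.
Proof. intros HUV HD HV. exact (HUV D _ HD (OX_union_is_sup D) HV). Qed.

(* Finite unions of members of [F] form a directed family of opens covering [V]. *)
Lemma way_below_open_list_cover {U V} (F : (X -> Prop) -> Prop) :
  way_below OL U V -> (forall W, F W -> O W) ->
  subset (proj1_sig V) (fun x => exists W, F W /\ W x) ->
  exists l, (forall W, In W l -> F W) /\ subset (proj1_sig U) (list_union l).
Proof.
  intros HUV HF HV.
  pose (OX_list := fun l (Hl : forall W, In W l -> F W) =>
          exist O (list_union l) (open_list_union HO l (fun W HW => HF W (Hl W HW))) : OX O).
  pose (D := fun Z : OX O => exists l, (forall W, In W l -> F W) /\ proj1_sig Z = list_union l).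
  assert (HD : directed OL D).
  { split.
    - exists (OX_list nil (fun W (HW : In W nil) => match HW with end)).
      exists nil. split; [intros W [] | reflexivity].
    - intros Z1 Z2 [l1 [Hl1 E1]] [l2 [Hl2 E2]].
      assert (Hl : forall W, In W (l1 ++ l2) -> F W)
        by (intros W HW; apply in_app_or in HW as [HW | HW]; auto).
      exists (OX_list _ Hl). split; [exists (l1 ++ l2); split; [exact Hl | reflexivity] |].
      split; intros x Hx; [rewrite E1 in Hx | rewrite E2 in Hx]; destruct Hx as [W [HW HWx]];
        exists W; split; auto; apply in_or_app; auto. }
  destruct (OX_way_below_cover D HUV HD) as [Z [[l [Hl E]] HUZ]].
  - intros x Hx. destruct (HV x Hx) as [W [HW HWx]].
    assert (Hl : forall W', In W' (W :: nil) -> F W') by (intros W' [<- | []]; exact HW).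
    exists (OX_list _ Hl). split; [exists (W :: nil); split; [exact Hl | reflexivity] |].
    exists W. split; [left |]; auto.
  - exists l. split; [exact Hl |]. intros x Hx. rewrite <- E. exact (HUZ x Hx).
Qed.

Lemma compact_between_way_below (U V : OX O) N : compact O N ->
  subset (proj1_sig U) N -> subset N (proj1_sig V) -> way_below OL U V.
Proof.
  intros HN HUN HNV D s HD Hs HVs.
  destruct (compact_directed_cover D (@proj1_sig _ O) N HN (fun Z _ => proj2_sig Z) HD)
    as [Z [HZ HNZ]].
  - intros x Hx. exact (OX_sup_subset_union Hs x (HVs x (HNV x Hx))).
  - exists Z. split; [exact HZ |]. intros x Hx. exact (HNZ x (HUN x Hx)).
Qed.

Lemma cc_of_lc : locally_compact O -> core_compact O.
Proof.
  intros Hlc. split; [intros D HD; eexists; apply OX_union_is_sup |]. intros V.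
  split; [split |].
  - exists (exist _ (fun _ => False) (open_empty HO)).
    intros D s [[Z HZ] _] _ _. exists Z. split; [exact HZ | intros x []].
  - intros U1 U2 H1 H2.
    assert (HU : O (fun x => proj1_sig U1 x \/ proj1_sig U2 x)).
    { apply open_ext with (OX_union (fun Z => Z = U1 \/ Z = U2)); [apply OX_union_open |].
      intros x. split.
      - intros [Z [[-> | ->] HZx]]; auto.
      - intros [Hx | Hx]; [exists U1 | exists U2]; auto. }
    exists (exist _ _ HU). split; [| split; intros x Hx; simpl; auto].
    intros D s HD Hs HVs. destruct (H1 D s HD Hs HVs) as [Z1 [HZ1 H1Z]].
    destruct (H2 D s HD Hs HVs) as [Z2 [HZ2 H2Z]].
    destruct (proj2 HD Z1 Z2 HZ1 HZ2) as [Z [HZ [HZ1Z HZ2Z]]].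
    exists Z. split; [exact HZ |]. intros x [Hx | Hx]; auto.
  - split; [intros U HU; exact (way_below_le OXle_refl HU) |].
    intros W HW x Hx.
    destruct (Hlc x (proj1_sig V) (proj2_sig V) Hx) as [N [HN [HNx HNV]]].
    apply (HW (exist _ (interior O N) (interior_open HO N))); [| exact HNx].
    apply (compact_between_way_below _ _ N HN); [intros y; apply interior_subset | exact HNV].
Qed.
End OpenLattice.

Section WayBelowChain.
Context {X : Type} {O : (X -> Prop) -> Prop} (HO : is_topology O) (Hwf : well_filtered O).
Context (c : nat -> OX O) (Hc : forall n, way_below (@OXle X O) (c (S n)) (c n)).
Local Notation C n := (proj1_sig (c n)).

Lemma chain_decreasing {n m} : n <= m -> subset (C m) (C n).
Proof.
  induction 1 as [| m _ IH]; [intros x Hx; exact Hx |].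
  intros x Hx. apply IH. exact (way_below_le OXle_refl (Hc m) x Hx).
Qed.

Definition chain_inter : X -> Prop := fun x => forall n, C n x.

Definition meets_chain (A : X -> Prop) : Prop := forall n, exists y, A y /\ C n y.

(* If the intersection missed [C n], the complements of the members would cover [C n],
   hence one of them would already contain [C (S n)]. *)
Lemma meets_chain_inter (ch : (X -> Prop) -> Prop) :
  (forall B, ch B -> closed O B /\ meets_chain B) ->
  (forall A B, ch A -> ch B -> subset A B \/ subset B A) -> (exists B, ch B) ->
  meets_chain (fun x => forall B, ch B -> B x).
Proof.
  intros Hch Htot [B0 HB0] n. apply NNPP; intros Hmiss.
  pose (D := fun Z : OX O => exists B, ch B /\ proj1_sig Z = fun y => ~ B y).
  assert (HD : directed (@OXle X O) D).
  { split.
    - exists (exist O _ (proj1 (Hch B0 HB0))). exists B0; auto.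
    - intros Z1 Z2 [B1 [HB1 E1]] [B2 [HB2 E2]].
      destruct (Htot B1 B2 HB1 HB2) as [H12 | H21].
      + exists Z1. split; [exists B1; auto | split; [apply OXle_refl |]].
        intros y. rewrite E1, E2. intros Hy HB1y. exact (Hy (H12 y HB1y)).
      + exists Z2. split; [exists B2; auto | split; [| apply OXle_refl]].
        intros y. rewrite E1, E2. intros Hy HB2y. exact (Hy (H21 y HB2y)). }
  destruct (OX_way_below_cover HO D (Hc n) HD) as [Z [[B [HB E]] HZ]].
  - intros y Hy. apply NNPP; intros Hny.
    apply Hmiss. exists y. split; [| exact Hy]. intros B HB. apply NNPP; intros HBy.
    apply Hny. exists (exist O _ (proj1 (Hch B HB))). split; [exists B; auto | exact HBy].
  - destruct (proj2 (Hch B HB) (S n)) as [y [HBy Hy]].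
    specialize (HZ y Hy). rewrite E in HZ. exact (HZ HBy).
Qed.

Lemma minimal_meets_chain {W} : O W -> meets_chain (fun y => ~ W y) ->
  exists A, closed O A /\ subset A (fun y => ~ W y) /\ meets_chain A /\
            forall B, closed O B -> subset B A -> meets_chain B -> subset A B.
Proof.
  intros HW HWc.
  destruct (chain_closed_family_minimal
              (fun B => closed O B /\ subset B (fun y => ~ W y) /\ meets_chain B) (fun y => ~ W y))
    as [A [[HAcl [HAW HAm]] HAmin]].
  - intros ch Hch Htot [B0 HB0]. split; [| split].
    + apply (closed_inter HO). intros B HB. apply Hch, HB.
    + intros y Hy. apply (Hch B0 HB0), Hy, HB0.
    + apply meets_chain_inter; [| exact Htot | exists B0; exact HB0].
      intros B HB. split; apply Hch, HB.
  - split; [| split; [intros y Hy; exact Hy | exact HWc]].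
    unfold closed. apply open_ext with W; [exact HW |]. intros y. split; [auto | apply NNPP].
  - exists A. split; [| split; [| split]]; auto.
    intros B HB HBA HBm. apply HAmin; [| exact HBA]. split; [| split]; auto.
    intros y Hy. exact (HAW y (HBA y Hy)).
Qed.

(* By minimality, [A] minus an open set meeting it can no longer meet every [C m]. *)
Lemma minimal_meets_chain_localizes A U : closed O A ->
  (forall B, closed O B -> subset B A -> meets_chain B -> subset A B) ->
  O U -> (exists a, A a /\ U a) -> exists m, forall y, A y -> C m y -> U y.
Proof.
  intros HA HAmin HU [a [HAa HUa]]. apply NNPP; intros Hnone.
  assert (Hm : meets_chain (fun y => A y /\ ~ U y)).
  { intros m. apply NNPP; intros Hmiss. apply Hnone. exists m. intros y HAy Hy.
    apply NNPP; intros HUy. apply Hmiss. exists y. auto. }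
  destruct (HAmin _ (closed_diff HO A U HA HU) (fun y Hy => proj1 Hy) Hm a HAa) as [_ HnUa].
  exact (HnUa HUa).
Qed.

Lemma chain_inter_subset_open {W} : O W -> subset chain_inter W -> exists n, subset (C n) W.
Proof.
  intros HW HKW. apply NNPP; intros Hnone.
  assert (HWc : meets_chain (fun y => ~ W y)).
  { intros n. apply NNPP; intros Hmiss. apply Hnone. exists n. intros y Hy.
    apply NNPP; intros HWy. apply Hmiss. exists y; auto. }
  destruct (minimal_meets_chain HW HWc) as [A [HAcl [HAW [HAm HAmin]]]].
  destruct (choice (fun k y => A y /\ C k y) HAm) as [d Hd].
  assert (Hev : forall U i, O U -> U (d i) -> exists m, forall k, m <= k -> U (d k)).
  { intros U i HU HUd.
    destruct (minimal_meets_chain_localizes A U HAcl HAmin HU) as [m Hm];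
      [exists (d i); exact (conj (proj1 (Hd i)) HUd) |].
    exists m. intros k Hmk. apply Hm; [apply Hd | exact (chain_decreasing Hmk _ (proj2 (Hd k)))]. }
  pose (T := fun j => exist (in_KX O) (tail_upset d j) (tail_upset_in_KX d Hev j) : KX O).
  destruct (Hwf W (fun K => exists j, K = T j) HW) as [K [[j ->] HjW]].
  - split; [exists (T 0); exists 0; reflexivity |].
    intros K1 K2 [j1 ->] [j2 ->].
    exists (T (max j1 j2)). split; [exists (max j1 j2); reflexivity |].
    split; intros z [k [Hk Hkz]]; exists k; split; auto; lia.
  - intros z Hz. apply HKW. intros n. destruct (Hz (T n) (ex_intro _ n eq_refl)) as [k [Hnk Hkz]].
    apply (open_saturated (proj2_sig (c n)) (chain_decreasing Hnk _ (proj2 (Hd k))) Hkz).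
  - apply (HAW (d j)); [apply Hd |]. apply HjW. exists j. split; [constructor | apply spec_refl].
Qed.

Lemma chain_inter_compact : compact O chain_inter.
Proof.
  intros F HF Hcov.
  destruct (chain_inter_subset_open (open_union HO F HF) Hcov) as [n Hn].
  destruct (way_below_open_list_cover HO F (Hc n) HF Hn) as [l [HlF Hl]].
  exists l. split; [exact HlF |]. intros x Hx. exact (Hl x (Hx (S n))).
Qed.
End WayBelowChain.

Lemma lc_of_cc {X : Type} {O : (X -> Prop) -> Prop} :
  is_topology O -> well_filtered O -> core_compact O -> locally_compact O.
Proof.
  intros HO Hwf Hcc x U HU HUx.
  pose (U' := exist O U HU).
  destruct (OX_sup_subset_union HO (proj2 (proj2 Hcc U')) x HUx) as [V [HVU HVx]].
  destruct (way_below_chain OXle_refl OXle_trans Hcc HVU) as [c [Hc0 [Hc HVc]]].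
  exists (chain_inter c). split; [exact (chain_inter_compact HO Hwf c Hc) | split].
  - exists (proj1_sig V). split; [exact (proj2_sig V) | split; [| exact HVx]].
    intros y Hy n. exact (way_below_le OXle_refl (HVc n) y Hy).
  - intros y Hy. specialize (Hy 0). rewrite Hc0 in Hy. exact Hy.
Qed.

Theorem mainTheorem1 (X : Type) (O : (X -> Prop) -> Prop)
  (HO : is_topology O) (HT0 : T0 O) (Hwf : well_filtered O) :
  let c1 := locally_compact O in
  let c2 := continuous_poset (Kle (O := O)) /\
            (forall V : KX O -> Prop, upper_vietoris_open V <-> scott_open (Kle (O := O)) V) in
  let c3 := continuous_poset (Kle (O := O)) /\ xi_continuous O in
  let c4 := continuous_poset (Kle (O := O)) /\ property_Q O in
  let c5 := core_compact O in
  (c1 <-> c2) /\ (c1 <-> c3) /\ (c1 <-> c4) /\ (c1 <-> c5).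
Proof.
  intros c1 c2 c3 c4 c5.
  assert (H14 : c1 -> c4).
  { intros Hlc. split; [exact (lc_K_continuous HO Hwf Hlc) | exact (lc_property_Q HO Hwf Hlc)]. }
  assert (H12 : c1 -> c2).
  { intros Hlc. destruct (H14 Hlc) as [Hcont HQ]. split; [exact Hcont |]. intros V. split.
    - apply (upper_vietoris_scott_open HO Hwf V).
    - apply (scott_upper_vietoris_open HO V Hcont HQ). }
  assert (H23 : c2 -> c3).
  { intros [Hcont Heq]. split; [exact Hcont | exact (xi_continuous_of_upper_vietoris HO Heq)]. }
  assert (H31 : c3 -> c1) by (intros [Hcont Hxi]; exact (lc_of_xi_continuous HO Hwf Hcont Hxi)).
  assert (H41 : c4 -> c1) by (intros [Hcont HQ]; exact (lc_of_property_Q HO Hwf Hcont HQ)).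
  split; [| split; [| split]]; split; auto.
  - exact (cc_of_lc HO).
  - exact (lc_of_cc HO Hwf).
Qed.
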